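(* Let $H$ be a connected graph with $k=|V(H)|>1$ vertices that does not contain two true twins. Then no deterministic online algorithm (without advice) solving the Delayed Connected $H$-Node-Deletion Problem has competitive ratio smaller than $k$.
   Context: All graphs are finite, simple and undirected. Two distinct vertices are true twins if they have the same closed neighborhood $N[v]=N(v)\cup\{v\}$ (in particular they are adjacent). An induced copy of $H$ in $G$ is an induced subgraph isomorphic to $H$; $G$ is $H$-free if it has none. An online graph $G$ has vertices $v_1,\dots,v_n$ revealed one at a time (with edges to earlier vertices); $G_t=G[\{v_1,\dots,v_t\}]$. Delayed Connected $H$-Node-Deletion Problem (for a fixed connected $H$): an online algorithm must choose sets $S_1\subseteq\dots\subseteq S_n$ with $S_t\subseteq V(G_t)$ and $G_t-S_t$ $H$-free for each $t$, where $S_t$ depends only on $G_t$; the cost is $|S_n|$. $\mathrm{OPT}(G)$ is the minimum size of $S\subseteq V(G)$ with $G-S$ $H$-free. An algorithm is $c$-competitive if there is a constant $\alpha\ge0$ with cost $\le c\cdot \mathrm{OPT}(G)+\alpha$ for every online graph $G$; its competitive ratio is the infimum of such $c\ge1$. *)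

From HB Require Import structures.
From mathcomp Require Import all_boot all_order all_algebra.
From mathcomp Require Import reals.
Set Implicit Arguments. Unset Strict Implicit. Unset Printing Implicit Defensive.
Import Order.TTheory GRing.Theory Num.Theory.

Definition true_twins (V : finType) (hE : rel V) (u v : V) : Prop :=
  u != v /\ forall w : V, ((w == u) || hE u w) = ((w == v) || hE v w).

Definition no_true_twins (V : finType) (hE : rel V) : Prop :=
  forall u v : V, ~ true_twins hE u v.

Definition connected_graph (V : finType) (hE : rel V) : Prop :=
  forall u v : V, connect hE u v.

(* An online graph with n vertices v_0,...,v_{n-1} is a sequence g of length
   n; the i-th entry lists, for each earlier vertex j < i, whether v_i is
   adjacent to v_j (entries at positions >= i are ignored).  The revealed
   graph G_t is the prefix [take t g]. *)
Definition ograph := seq (seq bool).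

Definition oadj (g : ograph) (i j : nat) : bool :=
  if j < i then nth false (nth [::] g i) j
  else if i < j then nth false (nth [::] g j) i
  else false.

Definition alive (g : ograph) (S : seq nat) : pred nat :=
  fun x => (x < size g) && (x \notin S).

Definition Hfree (V : finType) (hE : rel V) (g : ograph) (keep : pred nat)
  : Prop :=
  ~ exists f : V -> nat,
      [/\ injective f, forall v, keep (f v) &
          forall u v, u != v -> hE u v = oadj g (f u) (f v)].

Definition solution (V : finType) (hE : rel V) (g : ograph) (S : seq nat)
  : Prop :=
  [/\ uniq S, {in S, forall x, x < size g} & Hfree hE g (alive g S)].

Definition isOPT (V : finType) (hE : rel V) (g : ograph) (m : nat) : Prop :=
  (exists S, solution hE g S /\ size S = m) /\
  (forall S, solution hE g S -> m <= size S).

(* An algorithm maps the currently revealed graph G_t (a prefix) to the set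
   S_t (as a sequence of vertex indices); thus S_t depends only on G_t. *)
Definition online_alg := ograph -> seq nat.

Definition valid_alg (V : finType) (hE : rel V) (A : online_alg) : Prop :=
  forall g : ograph,
    [/\ {in A g, forall x, x < size g},
        forall t, {subset A (take t g) <= A g} &
        Hfree hE g (alive g (A g))].

Definition alg_cost (A : online_alg) (g : ograph) : nat := size (undup (A g)).

Definition competitive (R : realType) (V : finType) (hE : rel V)
  (A : online_alg) (c : R) : Prop :=
  exists alpha : R, (0 <= alpha)%R /\
    forall (g : ograph) (m : nat), isOPT hE g m ->
      ((alg_cost A g)%:R <= c * m%:R + alpha)%R.

From HB Require Import structures.
From mathcomp Require Import all_boot all_order all_algebra.
From mathcomp Require Import reals.
From mathcomp Require Import zify lra.
From Stdlib Require Import Classical.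
Import Order.TTheory GRing.Theory Num.Theory.
Set Implicit Arguments. Unset Strict Implicit. Unset Printing Implicit Defensive.

(* The adversary reveals a "blow-up" of H: every revealed vertex is a copy of
   a vertex of H, copies of the same or of adjacent vertices of H are
   adjacent.  It starts with one copy of each vertex of H and then, forever,
   adds a copy of a vertex of H all of whose copies the algorithm has already
   deleted (one exists, else the surviving copies would contain H).  The
   surviving copies then always carry distinct labels missing one vertex of
   H, so after n extra vertices the algorithm has deleted at least n + 1.
   Since H has no true twins, every induced copy of H in a blow-up uses all
   labels, so deleting all copies of the rarest label is a solution of size
   at most (k + n) / k.  Letting n grow rules out any ratio below k. *)

Section Blowup.

Variables (V : finType) (hE : rel V) (x0 : V).

Definition closed_adj (a b : V) : bool := (a == b) || hE a b.

Definition blowup (L : seq V) : ograph :=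
  mkseq (fun i => mkseq (fun j => closed_adj (nth x0 L i) (nth x0 L j)) i)
        (size L).

Lemma size_blowup L : size (blowup L) = size L.
Proof. by rewrite size_mkseq. Qed.

Lemma oadj_blowup L i j : symmetric hE ->
  (i < size L)%N -> (j < size L)%N ->
  oadj (blowup L) i j = (i != j) && closed_adj (nth x0 L i) (nth x0 L j).
Proof.
move=> hs hi hj; rewrite /oadj /blowup.
case: ltngtP => ij //; rewrite !nth_mkseq //.
by rewrite /closed_adj eq_sym hs.
Qed.

Lemma take_blowup_rcons L v : take (size L) (blowup (rcons L v)) = blowup L.
Proof.
apply: (@eq_from_nth _ [::]) => [|i].
  by rewrite size_take !size_blowup size_rcons ltnSn.
rewrite size_take !size_blowup size_rcons ltnSn => hi.
rewrite nth_take // !nth_mkseq ?size_rcons //; last exact: ltnW.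
apply: (@eq_from_nth _ false) => [|j]; rewrite !size_mkseq // => hj.
by rewrite !nth_mkseq // !nth_rcons hi (ltn_trans hj hi).
Qed.

Definition alive_label (S : seq nat) (L : seq V) (v : V) : bool :=
  has (fun i => (nth x0 L i == v) && (i \notin S)) (iota 0 (size L)).

Lemma Hfree_blowup_dead_label (S : seq nat) L : symmetric hE ->
  Hfree hE (blowup L) (alive (blowup L) S) -> exists v, ~~ alive_label S L v.
Proof.
move=> hs Hfree_L.
case: (pickP (fun v => ~~ alive_label S L v)) => [v dead_v | alive_all].
  by exists v.
set p := fun v i => (nth x0 L i == v) && (i \notin S).
set f := fun v => find (p v) (iota 0 (size L)).
have f_lt v : (f v < size L)%N.
  by rewrite -[X in (_ < X)%N](size_iota 0) -has_find; exact: negbFE (alive_all v).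
have f_alive v : p v (f v).
  have := nth_find 0 (negbFE (alive_all v)).
  by rewrite nth_iota ?add0n //; exact: f_lt.
have label_f v : nth x0 L (f v) = v by case/andP: (f_alive v) => /eqP.
case: Hfree_L; exists f; split.
- by move=> u v fuv; rewrite -(label_f u) -(label_f v) fuv.
- by move=> v; rewrite /alive size_blowup f_lt; case/andP: (f_alive v).
- move=> u v uv; rewrite oadj_blowup // !label_f /closed_adj (negPf uv) /=.
  by case: eqP => // fuv; move: uv; rewrite -(label_f u) -(label_f v) fuv eqxx.
Qed.

Definition label_class (L : seq V) (u : V) : seq nat :=
  [seq i <- iota 0 (size L) | nth x0 L i == u].

Lemma size_label_class L u : size (label_class L u) = count_mem u L.
Proof.
by rewrite size_filter -[in RHS](mkseq_nth x0 L) /mkseq count_map.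
Qed.

(* An induced copy of H in a blow-up maps distinct vertices of H to copies of
   distinct vertices: two vertices with the same label would be true twins. *)
Lemma solution_label_class L u : symmetric hE -> no_true_twins hE ->
  solution hE (blowup L) (label_class L u).
Proof.
move=> hs twin_free; split.
- by rewrite filter_uniq // iota_uniq.
- by move=> i; rewrite mem_filter mem_iota size_blowup => /andP[].
move=> [f [f_inj f_alive f_adj]].
have f_lt w : (f w < size L)%N.
  by case/andP: (f_alive w); rewrite size_blowup.
have label_f_neq w : nth x0 L (f w) != u.
  by case/andP: (f_alive w) => _; rewrite mem_filter mem_iota f_lt !andbT.
set phi := fun w => nth x0 L (f w).
have adj_phi a w : a != w -> hE a w = closed_adj (phi a) (phi w).
  move=> aw; rewrite f_adj // oadj_blowup //.
  by rewrite (inj_eq f_inj) aw.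
have phi_inj : injective phi.
  move=> a b eq_ab; apply/eqP/contraT => ab; case: (twin_free a b); split=> // w.
  case: (eqVneq w a) => [->|wa].
    by rewrite (negPf ab) (adj_phi b a) 1?eq_sym // eq_ab /closed_adj eqxx.
  case: (eqVneq w b) => [->|wb].
    by rewrite (adj_phi a b) // eq_ab /closed_adj eqxx.
  by rewrite /= !adj_phi 1?eq_sym // eq_ab.
have [a phi_a] := codomP (inj_card_onto phi_inj (leqnn _) u).
by move: (label_f_neq a); rewrite -/(phi a) -phi_a eqxx.
Qed.

Definition alive_labels_inj (S : seq nat) (L : seq V) : Prop :=
  {in [pred i | (i < size L)%N && (i \notin S)] &, injective (nth x0 L)}.

Lemma dead_label_deleted S L v i : ~~ alive_label S L v ->
  (i < size L)%N -> nth x0 L i = v -> i \in S.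
Proof.
move=> /hasPn dead_v hi liv; have := dead_v i.
by rewrite mem_iota hi liv eqxx negbK; apply.
Qed.

Lemma alive_labels_inj_rcons S S' L v :
  {subset S <= S'} -> ~~ alive_label S L v ->
  alive_labels_inj S L -> alive_labels_inj S' (rcons L v).
Proof.
move=> sub_S dead_v inj_L i j; rewrite !inE size_rcons !ltnS !nth_rcons.
move=> /andP[hi iS'] /andP[hj jS'].
have deleted k : (k < size L)%N -> nth x0 L k = v -> k \in S'.
  by move=> hk lkv; rewrite sub_S // (dead_label_deleted dead_v hk lkv).
case: ltnP => li; case: ltnP => lj.
- by move=> eq_ij; apply: inj_L; rewrite // inE ?li ?lj (contra (@sub_S _)).
- have -> : j = size L by apply/eqP; rewrite eqn_leq hj lj.
  by rewrite eqxx => /deleted; rewrite (negPf iS') => /(_ li).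
- have -> : i = size L by apply/eqP; rewrite eqn_leq hi li.
  by rewrite eqxx => /esym /deleted; rewrite (negPf jS') => /(_ lj).
- by move=> _; apply/eqP; rewrite eqn_leq (leq_trans hi lj) (leq_trans hj li).
Qed.

Lemma count_alive_le S L v : ~~ alive_label S L v -> alive_labels_inj S L ->
  (count (fun i => i \notin S) (iota 0 (size L)) <= #|V|.-1)%N.
Proof.
move=> dead_v inj_L; rewrite -size_filter -(size_map (nth x0 L)) -(cardC1 v).
rewrite cardE; apply: uniq_leq_size.
  rewrite map_inj_in_uniq ?filter_uniq ?iota_uniq // => i j.
  rewrite !mem_filter !mem_iota /= => /andP[iS hi] /andP[jS hj].
  by apply: inj_L; rewrite inE ?hi ?hj.
move=> w /mapP[i]; rewrite mem_filter mem_iota /= => /andP[iS hi] ->.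
rewrite mem_enum !inE; apply: contra iS => /eqP liv.
exact: dead_label_deleted dead_v hi liv.
Qed.

End Blowup.

Lemma size_le_alive_deleted (S : seq nat) n :
  (n <= count (fun i => i \notin S) (iota 0 n) + size (undup S))%N.
Proof.
rewrite -[X in (X <= _)%N](size_iota 0 n) -(count_predC (mem S) (iota 0 n)).
rewrite addnC leq_add2l -size_filter uniq_leq_size ?filter_uniq ?iota_uniq // => i.
by rewrite mem_filter mem_undup => /andP[].
Qed.

Section Adversary.

Variables (V : finType) (hE : rel V) (x0 : V) (A : online_alg).

Definition next_label (L : seq V) : V :=
  odflt x0 [pick v | ~~ alive_label x0 (A (blowup hE x0 L)) L v].

Fixpoint adversary (n : nat) : seq V :=
  if n is n'.+1 then rcons (adversary n') (next_label (adversary n'))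
  else enum V.

Hypotheses (hs : symmetric hE) (hA : valid_alg hE A).

Lemma next_label_dead L :
  ~~ alive_label x0 (A (blowup hE x0 L)) L (next_label L).
Proof.
rewrite /next_label; case: pickP => [v // | no_dead].
have [_ _ Hfree_L] := hA (blowup hE x0 L).
have [v dead_v] := Hfree_blowup_dead_label hs Hfree_L.
by move: (no_dead v); rewrite dead_v.
Qed.

Lemma size_adversary n : size (adversary n) = (#|V| + n)%N.
Proof. by elim: n => [|n IHn] /=; rewrite ?size_rcons ?IHn ?addnS // addn0 cardE. Qed.

Lemma adversary_alive_labels_inj n :
  alive_labels_inj x0 (A (blowup hE x0 (adversary n))) (adversary n).
Proof.
elim: n => [|n IHn] /=.
  move=> i j /andP[hi _] /andP[hj _] /eqP.
  by rewrite nth_uniq ?enum_uniq // => /eqP.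
apply: alive_labels_inj_rcons (next_label_dead _) IHn.
set L := adversary n.
have [_ sub_A _] := hA (blowup hE x0 (rcons L (next_label L))).
by have := sub_A (size L); rewrite take_blowup_rcons.
Qed.

Lemma adversary_cost n : (n < alg_cost A (blowup hE x0 (adversary n)))%N.
Proof.
have V_gt0 : (0 < #|V|)%N by apply/card_gt0P; exists x0.
have := count_alive_le (next_label_dead _) (adversary_alive_labels_inj (n := n)).
have := size_le_alive_deleted (A (blowup hE x0 (adversary n)))
          (size (adversary n)).
rewrite /alg_cost size_adversary; lia.
Qed.

End Adversary.

Lemma sum_count_mem (V : finType) (L : seq V) :
  (\sum_(u : V) count_mem u L)%N = size L.
Proof.
elim: L => [|x L IHL] /=; first by rewrite big1.
rewrite big_split /= IHL (bigD1 x) //= eqxx big1 // => u ux.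
by rewrite eq_sym (negPf ux).
Qed.

Lemma exists_rare_label (V : finType) (x0 : V) (L : seq V) :
  exists u : V, (#|V| * count_mem u L <= size L)%N.
Proof.
case: (@arg_minnP V x0 predT (fun u => count_mem u L)) => // u _ u_min.
exists u; rewrite -sum_count_mem -sum_nat_const.
by apply: leq_sum => w _; apply: u_min.
Qed.

Lemma isOPT_exists_le (V : finType) (hE : rel V) (g : ograph) (S : seq nat) :
  solution hE g S -> exists m, isOPT hE g m /\ (m <= size S)%N.
Proof.
move: {2}(size S) (leqnn (size S)) => n; elim: n S => [|n IHn] S le_Sn solS.
  exists (size S); split=> //; split; first by exists S.
  by move: le_Sn; rewrite leqn0 => /eqP ->.
case: (classic (exists2 S', solution hE g S' & (size S' < size S)%N)).
  move=> [S' solS' lt_S'S].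
  have [m [opt_m le_m]] := IHn S' (leq_trans lt_S'S le_Sn) solS'.
  by exists m; split; last exact: leq_trans le_m (ltnW lt_S'S).
move=> S_min; exists (size S); split=> //; split; first by exists S.
move=> S' solS'; rewrite leqNgt; apply/negP => lt_S'S.
by apply: S_min; exists S'.
Qed.

Local Open Scope ring_scope.

Lemma no_affine_bound_below_ratio (R : archiRealFieldType) (k : nat) (c alpha : R) :
  0 <= c -> c < k%:R ->
  ~ (forall n : nat, exists m : nat,
        (k * m <= k + n)%N /\ n.+1%:R <= c * m%:R + alpha).
Proof.
move=> c_ge0 c_lt_k bound.
have gap : 0 < k%:R - c by rewrite subr_gt0.
set X := (c * k%:R + k%:R * alpha) / (k%:R - c).
set n := (Num.truncn X).+1.
have n_large : c * k%:R + k%:R * alpha < (k%:R - c) * n%:R.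
  have : X < n%:R := truncnS_gt X.
  by rewrite ltr_pdivrMr // [n%:R * _]mulrC.
have [m [km hn]] := bound n.
have km' : k%:R * m%:R <= k%:R + n%:R :> R by rewrite -natrM -natrD ler_nat.
have P1 : k%:R * n.+1%:R <= k%:R * (c * m%:R + alpha) by rewrite ler_wpM2l.
have P2 : c * (k%:R * m%:R) <= c * (k%:R + n%:R) by rewrite ler_wpM2l.
rewrite -natr1 in P1.
have k_ge0 : 0 <= k%:R :> R by [].
lra.
Qed.

Theorem mainTheorem5 (R : realType) (V : finType) (hE : rel V) :
  symmetric hE -> irreflexive hE -> connected_graph hE ->
  (1 < #|V|)%N -> no_true_twins hE ->
  forall A : online_alg, valid_alg hE A ->
  forall c : R, 1 <= c -> c < (#|V|)%:R -> ~ competitive hE A c.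
Proof.
move=> hs _ _ V_gt1 twin_free A hA c c_ge1 c_lt_k [alpha [_ bounded]].
have [x0 _] : exists x0 : V, x0 \in V by apply/card_gt0P; exact: ltnW.
apply: (no_affine_bound_below_ratio (le_trans ler01 c_ge1) c_lt_k) => n.
set L := adversary hE x0 A n.
have [u rare_u] := exists_rare_label x0 L.
have [m [opt_m le_m]] := isOPT_exists_le (solution_label_class x0 L u hs twin_free).
rewrite size_label_class in le_m; exists m; split.
  rewrite -(size_adversary hE x0 A n) -/L.
  by apply: leq_trans rare_u; rewrite leq_mul2l le_m orbT.
apply: le_trans (bounded _ _ opt_m); rewrite ler_nat.
exact: adversary_cost.
Qed.
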